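(* Let $G=(V,E)$ be a graph with no isolated vertices, $m\ge1$ edges, and exactly $L$ vertices of degree $1$. Let $\mathcal{L}$ be the partition produced by the Following algorithm with parameter $d_0=1$ (described in the context). Then $$Q(\mathcal{L})\ \ge\ \frac{L}{2m}-\frac{\sum_{i=1}^n d_i^2}{m^2}.$$
   Context: $G=(V,E)$ is an undirected simple graph, $V=\{1,\dots,n\}$, $m=|E|\ge1$, adjacency matrix $A$, degrees $d_i$. For a partition $\mathcal{C}$ of $V$ into nonempty communities, its modularity is $Q(\mathcal{C})=\frac{1}{2m}\sum_{i,j}\left(A_{i,j}-\frac{d_id_j}{2m}\right)\delta_{i,j}$, the sum over all ordered pairs $(i,j)$ including $i=j$, where $\delta_{i,j}=1$ if $i,j$ lie in the same community and $0$ otherwise. Following algorithm with parameter $d_0=1$: start with all vertices unlabeled; process vertices in non-decreasing order of degree; for each vertex $v$ that is still unlabeled when processed and has $d_v\le 1$, let $u$ be a neighbor of $v$ not labeled ''follower'' (if several, one of minimum degree) and set $v$ to follow $u$, labeling $v$ ''follower'' and $u$ ''followee''; after this pass, label every still-unlabeled vertex ''followee''; finally, form one community for each followee, consisting of the followee together with all vertices that follow it. *)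

(* Graph on vertex set 'I_n (= {1..n} shifted to {0..n-1}). *)
From HB Require Import structures.
From mathcomp Require Import all_boot all_order all_algebra.
Set Implicit Arguments. Unset Strict Implicit. Unset Printing Implicit Defensive.
Import Order.TTheory GRing.Theory Num.Theory.

Section Following.
Variable n : nat.
Variable e : rel 'I_n.

Definition simple_graph : Prop := symmetric e /\ irreflexive e.

Definition deg (v : 'I_n) : nat := #|[pred u | e v u]|.

Definition nedges : nat := #|[pred p : 'I_n * 'I_n | e p.1 p.2 && (p.1 < p.2)%N]|.

Definition nleaves : nat := #|[pred v | deg v == 1%N]|.

(* modularity of the partition induced by community map c : vertex -> community id,
   i.e. delta_{i,j} = (c i == c j); computed over the rationals. *)
Definition modularity (T : eqType) (c : 'I_n -> T) : rat := (
  let m2 : rat := (2 * nedges)%:R in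
  m2^-1 * \sum_(i : 'I_n) \sum_(j : 'I_n)
     (((e i j : nat)%:R - (deg i)%:R * (deg j)%:R / m2) * ((c i == c j) : nat)%:R))%R.

Inductive label := Unlabeled | Follower of 'I_n | Followee.

Definition is_follower (l : label) : bool :=
  if l is Follower _ then true else false.

Definition state := 'I_n -> label.

Definition set_follow (s : state) (v u : 'I_n) : state :=
  fun x => if x == v then Follower u else if x == u then Followee else s x.

(* processing one vertex v, with parameter d0; nondeterministic in the choice
   among minimum-degree eligible neighbours *)
Inductive fstep (d0 : nat) : state -> 'I_n -> state -> Prop :=
| fstep_labeled s v : s v <> Unlabeled -> fstep d0 s v s
| fstep_bigdeg s v : (d0 < deg v)%N -> fstep d0 s v s
| fstep_noneighbor s v : s v = Unlabeled -> (deg v <= d0)%N ->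
    (forall u, e v u -> is_follower (s u)) -> fstep d0 s v s
| fstep_follow s v u : s v = Unlabeled -> (deg v <= d0)%N ->
    e v u -> ~~ is_follower (s u) ->
    (forall w, e v w -> ~~ is_follower (s w) -> (deg u <= deg w)%N) ->
    fstep d0 s v (set_follow s v u).

Inductive frun (d0 : nat) : state -> seq 'I_n -> state -> Prop :=
| frun_nil s : frun d0 s [::] s
| frun_cons s v vs s1 s2 : fstep d0 s v s1 -> frun d0 s1 vs s2 -> frun d0 s (v :: vs) s2.

Definition valid_order (vs : seq 'I_n) : Prop :=
  perm_eq vs (enum 'I_n) /\ sorted (fun a b => (deg a <= deg b)%N) vs.

(* final community map: each vertex is sent to its followee; vertices still
   unlabeled after the pass become followees (hence map to themselves) *)
Definition community_of (s : state) (x : 'I_n) : 'I_n :=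
  if s x is Follower u then u else x.

Definition following_partition (d0 : nat) (c : 'I_n -> 'I_n) : Prop :=
  exists vs s, valid_order vs /\ frun d0 (fun _ => Unlabeled) vs s /\
               c = community_of s.
End Following.

(* The run
   maintains an invariant (wf_state): a follower is adjacent to its followee,
   has degree at most 1, and its followee is labelled Followee; every Followee
   has a follower.  Moreover every leaf ends up "covered": it is a follower or
   is followed.  From this, with F the number of followers:
   - every follower contributes its edge twice to the intra-community edge
     count A = sum_{i,j} A_ij delta_ij, so A >= 2F;
   - leaves are followers or followees with a follower, so L <= 2F;
   - a community consists of its followee k plus followers of degree 1
     adjacent to k, so its volume is at most 2 d_k, hence
     B = sum_{i,j} d_i d_j delta_ij = sum_k vol_k^2 <= 4 sum_k d_k^2.
   Writing Q = (A - B/2m)/2m, the bound Q >= L/2m - sum d_i^2/m^2 follows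
   from L <= A and B <= 4 sum d_i^2 by field arithmetic. *)

From HB Require Import structures.
From mathcomp Require Import all_boot all_order all_algebra.
Import Order.TTheory GRing.Theory Num.Theory.
Set Implicit Arguments. Unset Strict Implicit.

Lemma sum_indicator (I : finType) (P : pred I) : \sum_i (P i : nat) = #|P|.
Proof.
rewrite -sum1_card [RHS]big_mkcond; apply: eq_bigr => i _.
by rewrite unfold_in; case: (P i).
Qed.

Lemma sum_same_class (I J : finType) (c : I -> J) (w : I -> nat) :
  \sum_i \sum_j w i * w j * (c i == c j) =
  \sum_k (\sum_(i | c i == k) w i) ^ 2.
Proof.
pose vol k := \sum_(i | c i == k) w i.
have -> : \sum_i \sum_j w i * w j * (c i == c j) = \sum_i w i * vol (c i).
  apply: eq_bigr => i _; rewrite /vol big_distrr /= [RHS]big_mkcond /=.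
  apply: eq_bigr => j _; rewrite eq_sym.
  by case: (c j == c i); rewrite ?muln1 ?muln0.
rewrite (partition_big c xpredT) //=; apply: eq_bigr => k _.
rewrite (eq_bigr (fun i => w i * vol k)) => [|i /eqP -> //].
by rewrite -big_distrl.
Qed.

Section FollowingRun.
Variable n : nat.
Variable e : rel 'I_n.
Hypothesis e_sym : symmetric e.
Hypothesis e_irr : irreflexive e.

Lemma deg_le1_neighbor_uniq v a b : (deg e v <= 1)%N -> e v a -> e v b -> a = b.
Proof. by move=> /card_le1_eqP deg_v eva evb; apply: deg_v; rewrite inE. Qed.

Definition wf_state (s : state n) : Prop :=
  (forall x u, s x = Follower u ->
     [/\ e x u, (deg e x <= 1)%N & s u = Followee n]) /\
  (forall u, s u = Followee n -> exists x, s x = Follower u).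

Definition covered (s : state n) (x : 'I_n) : Prop :=
  (exists u, s x = Follower u) \/ (exists y, s y = Follower x).

Section SetFollow.
Variables (s : state n) (v u : 'I_n).
Hypothesis s_v : s v = Unlabeled n.
Hypothesis s_u : ~~ is_follower (s u).

Lemma set_follow_follower x y :
  s x = Follower y -> set_follow s v u x = Follower y.
Proof.
move=> s_x; rewrite /set_follow.
case: eqP => [x_v|_]; first by rewrite x_v s_v in s_x.
by case: eqP => [x_u|_] //; move: s_u; rewrite -x_u s_x.
Qed.

Lemma set_follow_followee x :
  s x = Followee n -> set_follow s v u x = Followee n.
Proof.
move=> s_x; rewrite /set_follow.
case: eqP => [x_v|_]; first by rewrite x_v s_v in s_x.
by case: eqP.
Qed.

Lemma set_follow_covered x : covered s x -> covered (set_follow s v u) x.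
Proof.
case=> [[y s_x]|[y s_y]]; [left|right]; exists y;
  exact: set_follow_follower.
Qed.

(* Letting a vertex of degree at most 1 follow a neighbour preserves the
   invariant; irreflexivity ensures v <> u. *)
Lemma set_follow_wf : wf_state s -> (deg e v <= 1)%N -> e v u ->
  wf_state (set_follow s v u).
Proof.
move=> [follower_ok followee_ok] deg_v evu.
have v_u : v != u by apply: contraTneq evu => ->; rewrite e_irr.
split=> x; rewrite {1}/set_follow.
- move=> w; case: eqP => [-> [<-]|x_v].
    by split=> //; rewrite /set_follow eq_sym (negbTE v_u) eqxx.
  case: eqP => [//|x_u] s_x.
  have [exw deg_x s_w] := follower_ok _ _ s_x.
  by split=> //; apply: set_follow_followee.
- case: eqP => [//|x_v]; case: eqP => [->|x_u] s_x.
    by exists v; rewrite /set_follow eqxx.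
  have [y s_y] := followee_ok _ s_x.
  by exists y; apply: set_follow_follower.
Qed.

End SetFollow.

Lemma fstep_wf s v s' : fstep e 1 s v s' -> wf_state s -> wf_state s'.
Proof.
by case=> // {}s {}v u s_v deg_v evu s_u _ wf_s; apply: set_follow_wf.
Qed.

Lemma fstep_covered s v s' x : fstep e 1 s v s' -> covered s x -> covered s' x.
Proof.
by case=> // {}s {}v u s_v _ _ s_u _; apply: set_follow_covered.
Qed.

(* The only delicate case is the
   one where all neighbours of v are followers: the unique neighbour u of v
   follows some w, which must be v itself since deg u <= 1, contradicting
   that v is unlabeled while w is a followee. *)
Lemma fstep_covers_leaf s v s' : fstep e 1 s v s' -> wf_state s ->
  deg e v = 1%N -> covered s' v.
Proof.
case=> {s v s'}.
- move=> s v labeled_v [_ followee_ok] _.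
  case s_v: (s v) labeled_v => [|u|] // _.
    by left; exists u.
  by right; apply: followee_ok.
- by move=> s v + _ deg_v; rewrite deg_v.
- move=> s v s_v _ all_followers [follower_ok _] deg_v.
  have /card_gt0P [u] : (0 < deg e v)%N by rewrite deg_v.
  rewrite inE => evu; move: (all_followers u evu).
  case s_u: (s u) => [|w|] // _.
  have [e_uw deg_u s_w] := follower_ok _ _ s_u.
  have v_w : v = w by apply: (deg_le1_neighbor_uniq deg_u); rewrite // e_sym.
  by rewrite -v_w s_v in s_w.
- by move=> s v u *; left; exists u; rewrite /set_follow eqxx.
Qed.

Lemma frun_wf s vs s' : frun e 1 s vs s' -> wf_state s -> wf_state s'.
Proof. by elim=> // {}s v {}vs s1 s2 /fstep_wf step _ IH /step. Qed.

Lemma frun_covered s vs s' x : frun e 1 s vs s' -> covered s x -> covered s' x.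
Proof. by elim=> // {}s v {}vs s1 s2 /fstep_covered step _ IH /step. Qed.

Lemma frun_covers_leaves s vs s' : frun e 1 s vs s' -> wf_state s ->
  forall x, x \in vs -> deg e x = 1%N -> covered s' x.
Proof.
elim=> // {}s v {}vs s1 s2 step run IH wf_s x.
rewrite inE => /orP [/eqP -> | x_vs] deg_x.
- exact: frun_covered run (fstep_covers_leaf step wf_s deg_x).
- exact: IH (fstep_wf step wf_s) x x_vs deg_x.
Qed.

Lemma following_state c : following_partition e 1 c ->
  exists s, [/\ wf_state s, forall x, deg e x = 1%N -> covered s x
             & c = community_of s].
Proof.
move=> [vs [s [[vs_all _] [run ->]]]].
have wf0 : wf_state (fun _ => Unlabeled n) by [].
exists s; split=> //; first exact: frun_wf run wf0.
move=> x; apply: (frun_covers_leaves run wf0).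
by rewrite (perm_mem vs_all) mem_enum.
Qed.

Section Counting.
Variable s : state n.
Hypothesis wf_s : wf_state s.
Let c := community_of s.

Definition follows (x y : 'I_n) : bool :=
  if s x is Follower u then u == y else false.

Definition followers : {set 'I_n} := [set x | is_follower (s x)].

Lemma sum_follows x : \sum_y (follows x y : nat) = is_follower (s x).
Proof.
rewrite /follows; case: (s x) => [|u|]; try by rewrite big1.
by rewrite (bigD1 u) //= eqxx big1 // => y /negPf; rewrite eq_sym => ->.
Qed.

Lemma followsP x y : follows x y ->
  [/\ e x y, s x = Follower y & s y = Followee n].
Proof.
have [follower_ok _] := wf_s.
rewrite /follows; case s_x: (s x) => [|u|] // /eqP <-.
by have [] := follower_ok _ _ s_x.
Qed.

Lemma follows_same_community x y : follows x y -> c x = c y.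
Proof. by case/followsP=> _ s_x s_y; rewrite /c /community_of s_x s_y. Qed.

(* A follow relation between x and y (in at most one direction, since the
   target is a followee) is an intra-community edge. *)
Lemma follows_intra x y : (follows x y + follows y x <= e x y * (c x == c y))%N.
Proof.
case f_xy: (follows x y); case f_yx: (follows y x) => //=.
- have [_ _ s_y] := followsP f_xy; have [_ s_y' _] := followsP f_yx.
  by rewrite s_y in s_y'.
- have [e_xy _ _] := followsP f_xy.
  by rewrite e_xy (follows_same_community f_xy) eqxx.
- have [e_yx _ _] := followsP f_yx.
  by rewrite e_sym e_yx (follows_same_community f_yx) eqxx.
Qed.

(* Each follower edge is counted twice in the intra-community edge sum. *)
Lemma intra_edges_ge :
  (2 * #|followers| <= \sum_x \sum_y e x y * (c x == c y))%N.
Proof.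
pose follow_pairs := \sum_x \sum_y (follows x y + follows y x).
apply: leq_trans (_ : follow_pairs <= _)%N; last first.
  by apply: leq_sum => x _; apply: leq_sum => y _; apply: follows_intra.
rewrite /follow_pairs (eq_bigr _ (fun x _ => big_split _ _ _ _ _)) big_split /=.
rewrite [X in (_ <= _ + X)%N]exchange_big /=.
rewrite (eq_bigr _ (fun x _ => sum_follows x)).
by rewrite addnn -mul2n sum_indicator cardsE.
Qed.

(* Covered leaves are followers or followees of followers, and there are no
   more followees of followers than followers. *)
Lemma leaves_le_followers :
  (forall x, deg e x = 1%N -> covered s x) -> (nleaves e <= 2 * #|followers|)%N.
Proof.
move=> leaf_covered; rewrite /nleaves mul2n -addnn.
apply: leq_trans (_ : #|followers :|: c @: followers| <= _)%N.
  apply: subset_leq_card; apply/subsetP => x; rewrite inE => /eqP /leaf_covered.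
  case=> [[y s_x]|[y s_y]]; first by rewrite !inE s_x.
  apply/setUP; right; apply/imsetP; exists y; first by rewrite inE s_y.
  by rewrite /c /community_of s_y.
by rewrite cardsU (leq_trans (leq_subr _ _)) // leq_add2l leq_imset_card.
Qed.

Lemma community_member x k : c x = k -> x != k -> follows x k.
Proof.
by rewrite /c /community_of /follows; case: (s x) => [|u|] ->; rewrite ?eqxx.
Qed.

(* The volume of community k is at most twice the degree of k: besides k
   it contains only degree-1 neighbours of k. *)
Lemma community_vol_le k : (\sum_(x | c x == k) deg e x <= 2 * deg e k)%N.
Proof.
have [follower_ok _] := wf_s.
apply: leq_trans (_ : \sum_x ((x == k) * deg e k + e k x) <= _)%N.
  rewrite big_mkcond /=; apply: leq_sum => x _.
  case: eqP => [c_x|_] //; case: eqVneq => [-> | x_k].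
    by rewrite mul1n leq_addr.
  have [_ s_x _] := followsP (community_member c_x x_k).
  by have [e_xk deg_x _] := follower_ok _ _ s_x; rewrite e_sym e_xk.
rewrite big_split /= sum_indicator mul2n -addnn; apply: leq_add => //.
rewrite (bigD1 k) //= eqxx mul1n big1 ?addn0 // => x /negPf ->.
by rewrite mul0n.
Qed.

Lemma same_community_degrees_le :
  (\sum_x \sum_y deg e x * deg e y * (c x == c y) <= 4 * \sum_k deg e k ^ 2)%N.
Proof.
rewrite sum_same_class big_distrr /=; apply: leq_sum => k _.
have := community_vol_le k; rewrite -leq_sqr => /leq_trans; apply.
by rewrite expnMn.
Qed.

End Counting.
End FollowingRun.

From mathcomp Require Import ring.
Local Open Scope ring_scope.

Lemma modularityE n (e : rel 'I_n) (T : eqType) (c : 'I_n -> T) :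
  let m2 : rat := (2 * nedges e)%:R in
  modularity e c = m2^-1 *
    ((\sum_i \sum_j (e i j * (c i == c j))%N)%:R
     - (\sum_i \sum_j (deg e i * deg e j * (c i == c j))%N)%:R / m2).
Proof.
move=> m2; rewrite /modularity -/m2 !natr_sum mulr_suml -sumrB; congr (_ * _).
apply: eq_bigr => i _; rewrite !natr_sum mulr_suml -sumrB.
by apply: eq_bigr => j _; rewrite !natrM; ring.
Qed.

(* The final inequality: the difference is a sum of two nonnegative
   fractions (A - L)/2m and (4D - B)/4m^2. *)
Lemma modularity_bound_alg (A B L D m : rat) : 0 < m -> L <= A -> B <= 4 * D ->
  L / (2 * m) - D / m ^+ 2 <= (2 * m)^-1 * (A - B / (2 * m)).
Proof.
move=> m_gt0 LA BD; rewrite -subr_ge0.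
have -> : (2 * m)^-1 * (A - B / (2 * m)) - (L / (2 * m) - D / m ^+ 2) =
    (A - L) / (2 * m) + (4 * D - B) / (4 * m ^+ 2).
  by field; rewrite gt_eqF.
apply: addr_ge0; apply: divr_ge0; rewrite ?subr_ge0 //.
  by rewrite mulr_ge0 // ltW.
by rewrite mulr_ge0 // exprn_ge0 // ltW.
Qed.

Theorem mainTheorem6 (n : nat) (e : rel 'I_n) (c : 'I_n -> 'I_n) :
  simple_graph e ->
  (forall v : 'I_n, (0 < deg e v)%N) ->
  (1 <= nedges e)%N ->
  following_partition e 1 c ->
  modularity e c >=
    (nleaves e)%:R / (2 * nedges e)%:R
    - (\sum_(i : 'I_n) (deg e i ^ 2)%N%:R) / ((nedges e) ^ 2)%N%:R.
Proof.
move=> [e_sym e_irr] _ m_ge1.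
move=> /(following_state e_sym e_irr) [s [wf_s leaves_covered ->]].
rewrite modularityE /= natrM natrX -natr_sum.
apply: modularity_bound_alg; first by rewrite ltr0n.
- rewrite ler_nat; apply: leq_trans (intra_edges_ge e_sym wf_s).
  exact: leaves_le_followers.
- by rewrite -natrM ler_nat; apply: same_community_degrees_le.
Qed.
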